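(* Let $f\in\mathbb{R}[x_1,\dots,x_n]$ be a homogeneous polynomial of degree $3$ that is $\lambda$-bounded for some $\lambda>0$. Then $\max_{\|v\|=1} f(v)\le \lambda$, and moreover every degree-$4$ pseudo-expectation $\tilde{\mathbb{E}}$ on $\mathbb{R}[x]_{\le 4}$ satisfies $$\tilde{\mathbb{E}}\, f(x)\;\le\;\lambda\cdot\big(\tilde{\mathbb{E}}\,\|x\|^4\big)^{3/4}.$$
   Context: A degree-$d$ pseudo-expectation ($d$ even) is a linear functional $\tilde{\mathbb{E}}:\mathbb{R}[x]_{\le d}\to\mathbb{R}$ with $\tilde{\mathbb{E}}\,1=1$ and $\tilde{\mathbb{E}}\,p(x)^2\ge 0$ for every polynomial $p$ of degree at most $d/2$. A matrix $M\in\mathbb{R}^{n^2\times n^2}$ is a matrix representation of the homogeneous quartic $\|x\|^4$ if $\langle x^{\otimes 2}, M x^{\otimes 2}\rangle=\|x\|^4$ as polynomials. A homogeneous cubic $f$ is called $\lambda$-bounded if there exist matrices $A_1,\dots,A_n\in\mathbb{R}^{n\times n}$ with $f(x)=\sum_{i=1}^n x_i\langle x,A_i x\rangle$ and a matrix representation $M$ of $\|x\|^4$ such that $\sum_i A_i\otimes A_i\preceq \lambda^2 M$, i.e. $\langle u,(\lambda^2M-\sum_iA_i\otimes A_i)u\rangle\ge 0$ for all $u\in\mathbb{R}^{n^2}$. *)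

From HB Require Import structures.
From mathcomp Require Import all_boot all_order all_algebra.
Set Implicit Arguments. Unset Strict Implicit. Unset Printing Implicit Defensive.
Import Order.TTheory GRing.Theory Num.Theory.
Local Open Scope ring_scope.

Section SoSDefs.
Variable R : rcfType.

(* Flat index 'I_(m*n) <-> pairs 'I_m * 'I_n (inverse of mxvec_index). *)
Definition pair_of_index m n (k : 'I_(m * n)) : 'I_m * 'I_n :=
  enum_val (cast_ord (esym (mxvec_cast m n)) k).

Definition kron m1 n1 m2 n2 (A : 'M[R]_(m1, n1)) (B : 'M[R]_(m2, n2))
  : 'M[R]_(m1 * m2, n1 * n2) :=
  \matrix_(k, l) (A (pair_of_index k).1 (pair_of_index l).1 *
                  B (pair_of_index k).2 (pair_of_index l).2).

Definition tens2 n (x : 'cV[R]_n) : 'cV[R]_(n * n) :=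
  \col_k (x (pair_of_index k).1 0 * x (pair_of_index k).2 0).

Definition qform n (M : 'M[R]_n) (u : 'cV[R]_n) : R := (u^T *m M *m u) 0 0.

Definition sqnorm n (x : 'cV[R]_n) : R := \sum_i x i 0 ^+ 2.
Definition enorm n (x : 'cV[R]_n) : R := Num.sqrt (sqnorm x).

(* Polynomial functions R^n -> R of total degree at most d.  Over the reals,
   polynomials and polynomial functions are in bijection (degree-preserving). *)
Inductive polyfun n : nat -> ('cV[R]_n -> R) -> Prop :=
| pf_const d (c : R) : polyfun d (fun _ => c)
| pf_var d (i : 'I_n) : (1 <= d)%N -> polyfun d (fun x => x i 0)
| pf_add d p q : polyfun d p -> polyfun d q -> polyfun d (fun x => p x + q x)
| pf_mul d e m p q : (d + e <= m)%N -> polyfun d p -> polyfun e q ->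
                     polyfun m (fun x => p x * q x).

(* Degree-d pseudo-expectation: a linear functional on R[x]_{<= d}
   (modelled as a functional on functions, only its restriction to degree-<= d
   polynomial functions matters), normalized, and nonnegative on squares of
   polynomials of degree <= d/2. *)
Definition pseudo_expectation n (d : nat) (E : ('cV[R]_n -> R) -> R) : Prop :=
  [/\ forall (a b : R) p q, polyfun d p -> polyfun d q ->
        E (fun x => a * p x + b * q x) = a * E p + b * E q,
      E (fun _ => 1) = 1
    & forall p, polyfun d./2 p -> 0 <= E (fun x => p x ^+ 2)].

Definition represents_norm4 n (M : 'M[R]_(n * n)) : Prop :=
  forall x : 'cV[R]_n, qform M (tens2 x) = sqnorm x ^+ 2.

Definition lambda_bounded n (f : 'cV[R]_n -> R) (lam : R) : Prop :=
  exists (A : 'I_n -> 'M[R]_n) (M : 'M[R]_(n * n)),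
    [/\ forall x, f x = \sum_i x i 0 * qform (A i) x,
        represents_norm4 M
      & forall u : 'cV[R]_(n * n),
          0 <= qform (lam ^+ 2 *: M - \sum_i kron (A i) (A i)) u].

(* t^{3/4} for t >= 0. *)
Definition pow34 (t : R) : R := Num.sqrt t * Num.sqrt (Num.sqrt t).

End SoSDefs.

From HB Require Import structures.
From mathcomp Require Import all_boot all_order all_algebra.
From mathcomp Require Import zify ring lra.
From Stdlib Require Import FunctionalExtensionality.
Import Order.TTheory GRing.Theory Num.Theory.
Set Implicit Arguments. Unset Strict Implicit. Unset Printing Implicit Defensive.
Local Open Scope ring_scope.

(* Write f(x) = sum_i x_i w_i(x) with w_i(x) = <x, A_i x>.  Since M represents
   ||x||^4, lambda-boundedness says lambda^2 ||x||^4 - sum_i w_i(x)^2 is the form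
   <x (x) x, P x (x) x> with P positive semidefinite.  Symmetric Gaussian
   elimination writes a PSD form as a nonnegative combination of squares of
   linear forms, and the entries of x (x) x have degree 2, so a degree-4
   pseudo-expectation satisfies E sum_i w_i^2 <= lambda^2 E ||x||^4.  Pseudo
   Cauchy-Schwarz then gives
     E f = E sum_i x_i w_i <= (E ||x||^2)^(1/2) (E sum_i w_i^2)^(1/2)
         <= (E ||x||^4)^(1/4) * lambda (E ||x||^4)^(1/2).
   The bound on the unit sphere is the case of evaluation at a point, which is
   a pseudo-expectation of every degree. *)

Lemma affine_ge0_slope0 (R : realFieldType) (b c : R) :
  (forall t, 0 <= t * b + c) -> b = 0.
Proof.
move=> ge0; apply/eqP; apply: contraT => b_neq0.
by have := ge0 (- (c + 1) / b); rewrite divfK //; lra.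
Qed.

Lemma le_mul_of_quadratic_ge0 (R : realFieldType) (P F Q a b : R) :
  (forall s t, 0 <= s ^+ 2 * P - 2 * s * t * F + t ^+ 2 * Q) ->
  P <= a ^+ 2 -> Q <= b ^+ 2 -> 0 <= a -> 0 <= b -> F <= a * b.
Proof.
move=> ge0 Pa Qb a_ge0 b_ge0.
have P_ge0 : 0 <= P by have := ge0 1 0; rewrite expr0n /=; lra.
have Q_ge0 : 0 <= Q by have := ge0 0 1; rewrite expr0n /=; lra.
have [ab_gt0|ab_le0] := ltP 0 (a * b).
  have := ler_wpM2l (sqr_ge0 b) Pa; have := ler_wpM2l (sqr_ge0 a) Qb.
  have := ge0 b a => h3 h2 h1; rewrite -(ler_pM2l ab_gt0); nra.
have /eqP : a * b = 0 by apply/le_anti; rewrite ab_le0 mulr_ge0.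
rewrite mulf_eq0 => /orP[]/eqP ab0.
- have P0 : P = 0 by rewrite ab0 expr0n /= in Pa; lra.
  have F0 : - 2 * F = 0.
    by apply: (affine_ge0_slope0 (c := Q)) => t; have := ge0 t 1; rewrite P0; lra.
  by rewrite ab0 mul0r; lra.
- have Q0 : Q = 0 by rewrite ab0 expr0n /= in Qb; lra.
  have F0 : - 2 * F = 0.
    by apply: (affine_ge0_slope0 (c := P)) => t; have := ge0 1 t; rewrite Q0; lra.
  by rewrite ab0 mulr0; lra.
Qed.

Section PolyFun.
Variables (R : rcfType) (n : nat).
Implicit Types (p q : 'cV[R]_n -> R) (d e : nat).

Lemma polyfun_ext d p q : (forall x, p x = q x) -> polyfun d p -> polyfun d q.
Proof. by move=> /functional_extensionality <-. Qed.

Lemma polyfun_leq d e p : (d <= e)%N -> polyfun d p -> polyfun e p.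
Proof.
move=> + pd; elim: pd e => {d p}
  [d c|d i d_gt0|d p q _ IHp _ IHq|d e' m p q le_m pd _ qd _] e le_e.
- exact: pf_const.
- by apply: pf_var; exact: (leq_trans d_gt0 le_e).
- by apply: pf_add; [apply: IHp|apply: IHq].
- by apply: pf_mul pd qd; exact: (leq_trans le_m le_e).
Qed.

Lemma polyfunM d e p q :
  polyfun d p -> polyfun e q -> polyfun (d + e) (fun x => p x * q x).
Proof. exact: pf_mul. Qed.

Lemma polyfunX2 d p : polyfun d p -> polyfun (d + d) (fun x => p x ^+ 2).
Proof. by move=> pd; apply: polyfun_ext (polyfunM pd pd) => x; rewrite expr2. Qed.

Lemma polyfunZ d (c : R) p : polyfun d p -> polyfun d (fun x => c * p x).
Proof. exact: (pf_mul _ (pf_const n 0 c)). Qed.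

Lemma polyfunB d p q : polyfun d p -> polyfun d q -> polyfun d (fun x => p x - q x).
Proof.
move=> pd qd; apply: polyfun_ext (pf_add pd (polyfunZ (-1) qd)) => x.
by rewrite mulN1r.
Qed.

Lemma polyfun_sum d (I : Type) (r : seq I) (F : I -> 'cV[R]_n -> R) :
  (forall i, polyfun d (F i)) -> polyfun d (fun x => \sum_(i <- r) F i x).
Proof.
move=> Fd; elim: r => [|i r IHr].
  by apply: polyfun_ext (pf_const n d 0) => x; rewrite big_nil.
by apply: polyfun_ext (pf_add (Fd i) IHr) => x; rewrite big_cons.
Qed.

End PolyFun.

Section PsdSos.
Variables (R : rcfType) (N : nat).
Implicit Types (C : 'M[R]_N) (u : 'cV[R]_N) (p q : 'I_N).

Definition psdmx C := forall u, 0 <= qform C u.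

Lemma qformE C u : qform C u = \sum_k \sum_l C k l * u k 0 * u l 0.
Proof.
rewrite /qform mxE exchange_big /=; apply: eq_bigr => l _.
rewrite mxE mulr_suml; apply: eq_bigr => k _.
by rewrite !mxE [_ * C k l]mulrC.
Qed.

Lemma qformD (A B : 'M[R]_N) u : qform (A + B) u = qform A u + qform B u.
Proof. by rewrite /qform mulmxDr mulmxDl mxE. Qed.

Lemma qform_trmx (A : 'M[R]_N) u : qform A^T u = qform A u.
Proof.
rewrite !qformE exchange_big; apply: eq_bigr => l _; apply: eq_bigr => k _.
by rewrite mxE mulrAC.
Qed.

Lemma qform_scale_sub_sum (a : R) (A : 'M[R]_N) (I : Type) (r : seq I)
    (B : I -> 'M[R]_N) u :
  qform (a *: A - \sum_(i <- r) B i) u = a * qform A u - \sum_(i <- r) qform (B i) u.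
Proof.
rewrite /qform mulmxBr mulmxBl -scalemxAr -scalemxAl mulmx_sumr mulmx_suml.
by rewrite !mxE summxE.
Qed.

Lemma sum_mul_eq (F : 'I_N -> R) p : \sum_k F k * (k == p)%:R = F p.
Proof.
rewrite (bigD1 p) //= eqxx mulr1 big1 ?addr0 // => k /negbTE->.
by rewrite mulr0.
Qed.

Lemma qform_delta2 C p q (t : R) :
  qform C (\col_k (t * (k == p)%:R + (k == q)%:R)) =
  t ^+ 2 * C p p + t * (C p q + C q p) + C q q.
Proof.
rewrite qformE.
transitivity (\sum_k \sum_l (t ^+ 2 * (C k l * (k == p)%:R * (l == p)%:R)
   + t * (C k l * (k == p)%:R * (l == q)%:R) + t * (C k l * (k == q)%:R * (l == p)%:R)
   + C k l * (k == q)%:R * (l == q)%:R)).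
  by apply: eq_bigr => k _; apply: eq_bigr => l _; rewrite !mxE; ring.
have entry a b : \sum_k \sum_l C k l * (k == a)%:R * (l == b)%:R = C a b.
  under eq_bigr do rewrite sum_mul_eq.
  by rewrite -(sum_mul_eq (C^~ b) a); apply: eq_bigr => k _; rewrite mulrC.
under eq_bigr do rewrite !big_split /= -!mulr_sumr.
by rewrite !big_split /= -!mulr_sumr !entry; ring.
Qed.

Lemma psd_diag_ge0 C p : psdmx C -> 0 <= C p p.
Proof.
by move=> /(_ (\col_k (0 * (k == p)%:R + (k == p)%:R))); rewrite qform_delta2; lra.
Qed.

Lemma psd_diag0_row0 C p q : C^T = C -> psdmx C -> C p p = 0 -> C p q = 0.
Proof.
move=> sC pC Cpp0; have Cqp : C q p = C p q by rewrite -{1}sC mxE.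
suff : 2 * C p q = 0 by lra.
apply: (affine_ge0_slope0 (c := C q q)) => t.
have := pC (\col_k (t * (k == p)%:R + (k == q)%:R)).
by rewrite qform_delta2 Cpp0 Cqp; lra.
Qed.

(* Junk value: for [C p p = 0] the division yields 0 and [schur_pivot C p = C];
   for a PSD [C] row [p] then already vanishes (psd_diag0_row0), so the
   pivoting step below needs no case split. *)
Definition schur_pivot C p : 'M[R]_N :=
  \matrix_(k, l) (C k l - C k p * C p l / C p p).

Lemma schur_pivot_sym C p : C^T = C -> (schur_pivot C p)^T = schur_pivot C p.
Proof.
move=> sC; have sCE k l : C k l = C l k by rewrite -{1}sC mxE.
by apply/matrixP => k l; rewrite !mxE (sCE l k) (sCE l p) (sCE p k); ring.
Qed.

Lemma qform_schur_pivot C p u : C^T = C ->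
  qform C u = qform (schur_pivot C p) u + (C p p)^-1 * ((row p C *m u) 0 0) ^+ 2.
Proof.
move=> sC; have sCE k l : C k l = C l k by rewrite -{1}sC mxE.
have -> : (C p p)^-1 * ((row p C *m u) 0 0) ^+ 2 =
          \sum_k \sum_l C k p * C p l / C p p * u k 0 * u l 0.
  rewrite mxE; under eq_bigr do rewrite mxE.
  rewrite expr2 mulr_suml mulr_sumr; apply: eq_bigr => k _.
  rewrite !mulr_sumr; apply: eq_bigr => l _; rewrite (sCE p k); ring.
rewrite !qformE -big_split /=; apply: eq_bigr => k _; rewrite -big_split /=.
by apply: eq_bigr => l _; rewrite mxE; ring.
Qed.

Lemma schur_pivot_row0 C p l : C^T = C -> psdmx C -> schur_pivot C p p l = 0.
Proof.
move=> sC pC; rewrite mxE; have [Cpp0|Cpp_neq0] := eqVneq (C p p) 0.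
  by rewrite psd_diag0_row0 // mulr0 mul0r subrr.
by rewrite mulrAC divff // mul1r subrr.
Qed.

Lemma qform_shift C p u (c : R) :
  (forall l, C p l = 0) -> (forall k, C k p = 0) ->
  qform C (u + \col_k (c * (k == p)%:R)) = qform C u.
Proof.
move=> row0 col0; rewrite !qformE; apply: eq_bigr => k _; apply: eq_bigr => l _.
rewrite !mxE; have [->|_] := eqVneq k p; first by rewrite row0 !mul0r.
have [->|_] := eqVneq l p; first by rewrite col0 !mul0r.
by rewrite !mulr0 !addr0.
Qed.

Lemma schur_pivot_psd C p : C^T = C -> psdmx C -> psdmx (schur_pivot C p).
Proof.
move=> sC pC u; set S := (row p C *m u) 0 0.
have row0 l : schur_pivot C p p l = 0 by apply: schur_pivot_row0.
have col0 k : schur_pivot C p k p = 0.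
  by rewrite -(schur_pivot_sym p sC) mxE row0.
rewrite -(qform_shift u (- (S / C p p)) row0 col0).
set w := u + _; have := pC w; rewrite (qform_schur_pivot p w sC).
suff -> : (C p p)^-1 * ((row p C *m w) 0 0) ^+ 2 = 0 by rewrite addr0.
have -> : (row p C *m w) 0 0 = S - C p p * (S / C p p).
  rewrite mulmxDr mxE; congr (_ + _); rewrite mxE -[RHS]mulrN.
  rewrite -(sum_mul_eq (fun k => C p k * - (S / C p p)) p).
  by apply: eq_bigr => k _; rewrite !mxE; ring.
have [->|Cpp_neq0] := eqVneq (C p p) 0; first by rewrite invr0 mul0r.
by rewrite [C p p * _]mulrC divfK // subrr expr0n /= mulr0.
Qed.

Lemma psd_sos C : C^T = C -> psdmx C ->
  exists2 s : seq (R * 'rV[R]_N), all (fun a => 0 <= a.1) s &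
    forall u, qform C u = \sum_(a <- s) a.1 * ((a.2 *m u) 0 0) ^+ 2.
Proof.
(* Induction on a bound m for the nonzero rows: pivoting on row m leaves a
   Schur complement whose nonzero rows lie below m. *)
suff sos_supp m : forall C, C^T = C -> psdmx C ->
    (forall k l : 'I_N, (m <= k)%N -> C k l = 0) ->
  exists2 s : seq (R * 'rV[R]_N), all (fun a => 0 <= a.1) s &
    forall u, qform C u = \sum_(a <- s) a.1 * ((a.2 *m u) 0 0) ^+ 2.
  by move=> sC pC; apply: (sos_supp N) => // k l; rewrite leqNgt ltn_ord.
elim: m => [|m IHm] {}C sC pC supp.
  exists [::] => // u; rewrite big_nil qformE big1 // => k _.
  by rewrite big1 // => l _; rewrite supp // !mul0r.
have [m_lt_N|N_le_m] := ltnP m N; last first.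
  by apply: IHm => // k l m_le_k; have := ltn_ord k; rewrite ltnNge (leq_trans N_le_m).
pose p := Ordinal m_lt_N.
have [s s_ge0 sE] : exists2 s : seq (R * 'rV[R]_N), all (fun a => 0 <= a.1) s &
    forall u, qform (schur_pivot C p) u = \sum_(a <- s) a.1 * ((a.2 *m u) 0 0) ^+ 2.
  apply: IHm; [exact: schur_pivot_sym | exact: schur_pivot_psd |].
  move=> k l; rewrite leq_eqVlt => /orP[/eqP m_eq_k|m_lt_k].
    have -> : k = p by apply: val_inj; rewrite /= m_eq_k.
    exact: schur_pivot_row0.
  by rewrite mxE (supp k l) ?(supp k p) // !mul0r subrr.
exists (((C p p)^-1, row p C) :: s) => [|u].
  by rewrite /= s_ge0 invr_ge0 psd_diag_ge0.
by rewrite big_cons (qform_schur_pivot p u sC) sE addrC.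
Qed.

End PsdSos.

Lemma sum_pair_of_index (V : nmodType) m (F : 'I_m * 'I_m -> V) :
  \sum_(k < m * m) F (pair_of_index k) = \sum_i \sum_j F (i, j).
Proof.
rewrite pair_bigA /= (reindex (@pair_of_index m m)) /=.
  by apply: eq_bigr => k _; rewrite -surjective_pairing.
exists (fun ij => cast_ord (mxvec_cast m m) (enum_rank ij)) => k _.
  by rewrite /pair_of_index enum_valK cast_ordKV.
by rewrite /pair_of_index cast_ordK enum_rankK.
Qed.

Lemma qform_kron (R : rcfType) m (A B : 'M[R]_m) x :
  qform (kron A B) (tens2 x) = qform A x * qform B x.
Proof.
rewrite qformE.
under eq_bigr do under eq_bigr do rewrite !mxE.
rewrite (sum_pair_of_index (fun ij => \sum_l A ij.1 (pair_of_index l).1 *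
    B ij.2 (pair_of_index l).2 * (x ij.1 0 * x ij.2 0) *
    (x (pair_of_index l).1 0 * x (pair_of_index l).2 0))) /=.
under eq_bigr do under eq_bigr do rewrite (sum_pair_of_index (fun kl =>
    A _ kl.1 * B _ kl.2 * (x _ 0 * x _ 0) * (x kl.1 0 * x kl.2 0))) /=.
rewrite !qformE mulr_suml; apply: eq_bigr => i1 _.
rewrite mulr_suml exchange_big /=; apply: eq_bigr => i2 _.
rewrite mulr_sumr; apply: eq_bigr => k _.
by rewrite mulr_sumr; apply: eq_bigr => l _; ring.
Qed.

Section Degree2.
Variables (R : rcfType) (n : nat).

Lemma polyfun_qform (M : 'M[R]_n) : polyfun 2 (fun x => qform M x).
Proof.
apply: polyfun_ext (fun x => esym (qformE M x)) _.
apply: polyfun_sum => k; apply: polyfun_sum => l.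
by apply: (polyfunM (d := 1)); [apply: polyfunZ|]; apply: pf_var.
Qed.

Lemma polyfun_tens2 (k : 'I_(n * n)) : polyfun 2 (fun x : 'cV[R]_n => tens2 x k 0).
Proof.
apply: polyfun_ext (polyfunM (pf_var R (pair_of_index k).1 (leqnn 1))
                             (pf_var R (pair_of_index k).2 (leqnn 1))).
by move=> x; rewrite mxE.
Qed.

Lemma polyfun_sqnorm : polyfun 2 (fun x : 'cV[R]_n => sqnorm x).
Proof. by apply: polyfun_sum => i; apply: (polyfunX2 (d := 1)); apply: pf_var. Qed.

End Degree2.

Section PseudoExpectation.
Variables (R : rcfType) (n d : nat) (E : ('cV[R]_n -> R) -> R).
Hypothesis pE : pseudo_expectation d E.
Implicit Types (p q : 'cV[R]_n -> R).

Lemma pE_ext p q : (forall x, p x = q x) -> E p = E q.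
Proof. by move=> /functional_extensionality ->. Qed.

Lemma pE_lin (a b : R) p q : polyfun d p -> polyfun d q ->
  E (fun x => a * p x + b * q x) = a * E p + b * E q.
Proof. by case: pE => lin _ _; apply: lin. Qed.

Lemma pE_scale (a : R) p : polyfun d p -> E (fun x => a * p x) = a * E p.
Proof.
move=> pd; rewrite -[RHS]addr0 -(mul0r (E p)) -pE_lin //.
by apply: pE_ext => x; rewrite mul0r addr0.
Qed.

Lemma pE_add p q : polyfun d p -> polyfun d q -> E (fun x => p x + q x) = E p + E q.
Proof.
move=> pd qd; rewrite -[E p]mul1r -[E q]mul1r -pE_lin //.
by apply: pE_ext => x; rewrite !mul1r.
Qed.

Lemma pE_sub p q : polyfun d p -> polyfun d q -> E (fun x => p x - q x) = E p - E q.
Proof.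
move=> pd qd; rewrite -[E p]mul1r -mulN1r -pE_lin //.
by apply: pE_ext => x; rewrite mul1r mulN1r.
Qed.

Lemma pE_const (c : R) : E (fun _ => c) = c.
Proof.
case: pE => _ E1 _; rewrite -[RHS]mulr1 -E1 -pE_scale; last exact: pf_const.
by apply: pE_ext => x; rewrite mulr1.
Qed.

Lemma pE_sum (I : Type) (r : seq I) (F : I -> 'cV[R]_n -> R) :
  (forall i, polyfun d (F i)) ->
  E (fun x => \sum_(i <- r) F i x) = \sum_(i <- r) E (F i).
Proof.
move=> Fd; elim: r => [|i r IHr].
  by rewrite big_nil -[RHS](pE_const 0); apply: pE_ext => x; rewrite big_nil.
rewrite big_cons -IHr -pE_add //; last exact: polyfun_sum.
by apply: pE_ext => x; rewrite big_cons.
Qed.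

Lemma polyfun_half p : polyfun d./2 p -> polyfun d p.
Proof. by apply: polyfun_leq; lia. Qed.

Lemma polyfun_half_sqr p : polyfun d./2 p -> polyfun d (fun x => p x ^+ 2).
Proof. by move=> /polyfunX2; apply: polyfun_leq; lia. Qed.

Lemma pE_sqr_ge0 p : polyfun d./2 p -> 0 <= E (fun x => p x ^+ 2).
Proof. by case: pE => _ _; apply. Qed.

Lemma pE_sqr_le p : polyfun d./2 p -> E p ^+ 2 <= E (fun x => p x ^+ 2).
Proof.
move=> pd; have := pE_sqr_ge0 (polyfunB pd (pf_const n d./2 (E p))).
have -> : E (fun x => (p x - E p) ^+ 2) =
          E (fun x => p x ^+ 2) - E (fun x => 2 * E p * p x - E p ^+ 2).
  rewrite -pE_sub; first by apply: pE_ext => x; ring.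
  - exact: polyfun_half_sqr.
  - by apply: polyfunB; [apply: polyfunZ; apply: polyfun_half | apply: pf_const].
rewrite pE_sub ?pE_scale ?pE_const ?expr2; first lra; try exact: pf_const.
- exact: polyfun_half.
- exact/polyfunZ/polyfun_half.
Qed.

Lemma pE_cauchy_schwarz (I : Type) (r : seq I) (P Q : I -> 'cV[R]_n -> R) (a b : R) :
  (forall i, polyfun d./2 (P i)) -> (forall i, polyfun d./2 (Q i)) ->
  E (fun x => \sum_(i <- r) P i x ^+ 2) <= a ^+ 2 ->
  E (fun x => \sum_(i <- r) Q i x ^+ 2) <= b ^+ 2 -> 0 <= a -> 0 <= b ->
  E (fun x => \sum_(i <- r) P i x * Q i x) <= a * b.
Proof.
move=> Pd Qd; apply: le_mul_of_quadratic_ge0 => s t.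
have PQd i : polyfun d./2 (fun x => s * P i x - t * Q i x).
  by apply: polyfunB; apply: polyfunZ.
have : 0 <= E (fun x => \sum_(i <- r) (s * P i x - t * Q i x) ^+ 2).
  rewrite pE_sum => [|i]; last exact: polyfun_half_sqr.
  by apply: sumr_ge0 => i _; apply: pE_sqr_ge0.
have Pd2 i := polyfun_half_sqr (Pd i); have Qd2 i := polyfun_half_sqr (Qd i).
have PQd2 i : polyfun d (fun x => P i x * Q i x).
  by apply: polyfun_leq (polyfunM (Pd i) (Qd i)); lia.
rewrite (pE_ext (q := fun x => s ^+ 2 * \sum_(i <- r) P i x ^+ 2 -
            2 * s * t * \sum_(i <- r) P i x * Q i x + t ^+ 2 * \sum_(i <- r) Q i x ^+ 2)).
  rewrite pE_add ?pE_sub ?pE_scale //;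
    by repeat (apply: polyfunB || apply: pf_add || apply: polyfunZ || apply: polyfun_sum).
move=> x; rewrite !mulr_sumr -sumrB -big_split /=.
by apply: eq_bigr => i _; ring.
Qed.

Lemma pE_qform_ge0 N (P : 'M[R]_N) (y : 'cV[R]_n -> 'cV[R]_N) :
  psdmx P -> (forall k, polyfun d./2 (fun x => y x k 0)) ->
  0 <= E (fun x => qform P (y x)).
Proof.
move=> pP yd; pose C := P + P^T.
have qformC u : qform P u = 2^-1 * qform C u.
  by rewrite qformD qform_trmx; field.
have [s s_ge0 sE] : exists2 s : seq (R * 'rV[R]_N), all (fun a => 0 <= a.1) s &
    forall u, qform C u = \sum_(a <- s) a.1 * ((a.2 *m u) 0 0) ^+ 2.
  apply: psd_sos => [|u]; first by rewrite linearD /= trmxK addrC.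
  by rewrite qformD qform_trmx addr_ge0.
have ad (a : 'rV[R]_N) : polyfun d./2 (fun x => (a *m y x) 0 0).
  apply: polyfun_ext (polyfun_sum (index_enum _) (fun k => polyfunZ (a 0 k) (yd k))).
  by move=> x; rewrite mxE.
rewrite (pE_ext (q := fun x => 2^-1 * \sum_(a <- s) a.1 * ((a.2 *m y x) 0 0) ^+ 2)).
  rewrite pE_scale; last by apply: polyfun_sum => a; apply/polyfunZ/polyfun_half_sqr.
  rewrite pE_sum => [|a]; last exact/polyfunZ/polyfun_half_sqr.
  apply: mulr_ge0; first by rewrite invr_ge0.
  rewrite big_seq; apply: sumr_ge0 => a a_in.
  rewrite pE_scale; last exact: polyfun_half_sqr.
  by apply: mulr_ge0; [exact: (allP s_ge0 a a_in) | exact: pE_sqr_ge0].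
by move=> x; rewrite qformC sE.
Qed.

End PseudoExpectation.

Lemma ler_sqrt_of_sqr_le (R : rcfType) (a T : R) : a ^+ 2 <= T -> a <= Num.sqrt T.
Proof.
move=> aT; apply: le_trans (ler_norm a) _.
by rewrite -sqrtr_sqr ler_sqrt // (le_trans (sqr_ge0 a)).
Qed.

Lemma pE_lambda_bounded (R : rcfType) n (f : 'cV[R]_n -> R) (lam : R)
    (E : ('cV[R]_n -> R) -> R) :
  0 < lam -> lambda_bounded f lam -> pseudo_expectation 4 E ->
  E f <= lam * pow34 (E (fun x => sqnorm x ^+ 2)).
Proof.
move=> lam_gt0 [A [M [fE Mrep Ppsd]]] pE.
set T := E (fun x => sqnorm x ^+ 2); set r := Num.sqrt (Num.sqrt T).
have T_ge0 : 0 <= T := pE_sqr_ge0 pE (polyfun_sqnorm R n).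
have r2 : r ^+ 2 = Num.sqrt T by rewrite sqr_sqrtr ?sqrtr_ge0.
have w2 i : polyfun 2 (fun x => qform (A i) x) by apply: polyfun_qform.
have x2 (i : 'I_n) : polyfun 2 (fun x : 'cV[R]_n => x i 0) by apply: pf_var.
have normE : E (fun x => sqnorm x) <= r ^+ 2.
  by rewrite r2; apply/ler_sqrt_of_sqr_le/(pE_sqr_le pE (polyfun_sqnorm R n)).
have wE : E (fun x => \sum_i qform (A i) x ^+ 2) <= (lam * r ^+ 2) ^+ 2.
  rewrite exprMn r2 sqr_sqrtr // -subr_ge0.
  have := pE_qform_ge0 pE Ppsd (polyfun_tens2 R (n := n)).
  rewrite (pE_ext E (q := fun x => lam ^+ 2 * sqnorm x ^+ 2 - \sum_i qform (A i) x ^+ 2)).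
    rewrite (pE_sub pE) ?(pE_scale pE) //.
    - exact: (polyfunX2 (polyfun_sqnorm R n)).
    - exact/polyfunZ/(polyfunX2 (polyfun_sqnorm R n)).
    - by apply: polyfun_sum => i; apply: (polyfunX2 (d := 2)).
  by move=> x; rewrite qform_scale_sub_sum Mrep; under eq_bigr do rewrite qform_kron -expr2.
have := pE_cauchy_schwarz pE (r := index_enum _) x2 w2 normE wE (sqrtr_ge0 _)
  (mulr_ge0 (ltW lam_gt0) (sqr_ge0 r)).
rewrite (pE_ext E (q := f)) => [|x]; last by rewrite fE.
by rewrite /pow34 -/r -r2 (_ : lam * (r ^+ 2 * r) = r * (lam * r ^+ 2)) //; ring.
Qed.

Lemma pseudo_expectation_eval (R : rcfType) n d (v : 'cV[R]_n) :
  pseudo_expectation d (fun p => p v).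
Proof. by split=> // p _; apply: sqr_ge0. Qed.

Theorem mainTheorem1 (R : rcfType) (n : nat) (f : 'cV[R]_n -> R) (lam : R) :
  0 < lam ->
  polyfun 3 f -> (forall (t : R) x, f (t *: x) = t ^+ 3 * f x) ->
  lambda_bounded f lam ->
  (forall v : 'cV[R]_n, enorm v = 1 -> f v <= lam) /\
  (forall E : ('cV[R]_n -> R) -> R, pseudo_expectation 4 E ->
     E f <= lam * pow34 (E (fun x => sqnorm x ^+ 2))).
Proof.
move=> lam_gt0 _ _ bounded; split=> [v v1|E pE]; last exact: pE_lambda_bounded.
have := pE_lambda_bounded lam_gt0 bounded (pseudo_expectation_eval 4 v) => /=.
have sqnorm1 : sqnorm v = 1.
  rewrite -[sqnorm v]sqr_sqrtr; first by rewrite -/(enorm v) v1 expr1n.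
  by apply: sumr_ge0 => i _; apply: sqr_ge0.
by rewrite sqnorm1 expr1n /pow34 !sqrtr1 !mulr1.
Qed.
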